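(* Let $n\ge 2$ and let $\Delta'$ be the simplicial complex on the vertex set $\{(i,j)\in[n]^2: i\ne j\}$ whose faces are the sets $F$ such that $\prod_{(i,j)\in F}x_{ij}\notin H(2,n)$, where $H(2,n)$ is as described in the context. Order the facets of $\Delta'$ as follows: if $F$ is a facet of $\Delta_R$ and $G$ is a facet of $\Delta_S$, then $F<G$ iff $R<S$ in the order on subsets described in the context, or $R=S$ and $F<G$ in the standard order of paths of the grid $R\times([n]\setminus R)$. Then this total order is a two-way shelling of $\Delta'$ (both it and its reverse are shellings). More precisely, for every facet $F$ of $\Delta'$ that is not the minimal facet, $$\langle F\rangle\cap\langle G: G<F\rangle=\langle F\setminus\{x\}: x\in F^-\rangle,$$ and for every facet $F$ that is not the maximal facet, $$\langle F\rangle\cap\langle G: G>F\rangle=\langle F\setminus\{x\}: x\in F^+\rangle.$$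
   Context: $H(2,n)\subset K[x_{ij}:1\le i,j\le n]$ is the monomial ideal generated by, for all $i<h$ and $j<k$: $x_{ik}x_{hj}$ whenever $i=j$ or $h=k$, and $x_{ij}x_{hk}$ whenever $i\ne j$ and $h\ne k$. For sets $F_1,\dots,F_k$, $\langle F_1,\dots,F_k\rangle$ denotes the smallest simplicial complex containing them. For a nonempty proper subset $R\subset[n]$, $\Delta_R=\{F\in\Delta': F\subseteq R\times([n]\setminus R)\}$. Write $R=\{r_1<\dots<r_p\}$, $[n]\setminus R=\{c_1<\dots<c_{q}\}$ and view $R\times([n]\setminus R)$ as a grid with row $r_1$ on top and column $c_1$ on the left. A path in this grid is a sequence of positions starting at $(r_p,c_1)$ (bottom left) and ending at $(r_1,c_q)$ (top right), each step going either horizontally right ($(r_a,c_b)\to(r_a,c_{b+1})$) or vertically up ($(r_a,c_b)\to(r_{a-1},c_b)$). It is a fact (established in the paper) that the facets of $\Delta_R$ are exactly these paths, and every facet of $\Delta'$ is a facet of $\Delta_R$ for exactly one $R$. Types of points of a path $F$: a point is a left turn if the step into it is horizontal and the step out of it is vertical; a right turn if the step into it is vertical and the step out is horizontal; every other point is the only point of $F$ in its column (type $\bullet$) or the only point of $F$ in its row (type $\circ$) (if both hold, i.e. the grid is $1\times1$, the point is regarded as type $\bullet$). Order on nonempty proper subsets written as increasing sequences: $S=\{a_1<\dots<a_s\}<R=\{b_1<\dots<b_t\}$ iff either $a_j<b_j$ for the smallest $j$ with $a_j\ne b_j$, or $s<t$ and $a_i=b_i$ for $i=1,\dots,s$. Standard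 order of paths in a fixed grid: $F<G$ iff at the first step (going from bottom left to top right) where they differ, the step of $F$ is vertical (and that of $G$ horizontal). For a facet $F$ of $\Delta_R$: $F^-$ consists of the left turns of $F$, the points of type $\bullet$ whose column index is $<\max(R)$, and the points of type $\circ$ whose row index is $\max(R)$; $F^+=F\setminus F^-$. *)

From HB Require Import structures.
From mathcomp Require Import all_boot all_order all_algebra.
From mathcomp Require Import mpoly.
Set Implicit Arguments.
Unset Strict Implicit.
Unset Printing Implicit Defensive.
Import GRing.Theory.

Section H2n.
Variables (K : fieldType) (n : nat).

(* Positions (i,j) of [n]^2; [n] is encoded 0-based as 'I_n. *)
Definition vertex := ('I_n * 'I_n)%type.

Definition xv (i j : 'I_n) : {mpoly K[n * n]} := 'X_(mxvec_index i j).

(* Generator of H(2,n) indexed by i<h, j<k. *)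
Definition Hgen (i h j k : 'I_n) : {mpoly K[n * n]} :=
  if (i == j) || (h == k) then (xv i k * xv h j)%R else (xv i j * xv h k)%R.

Definition in_H (p : {mpoly K[n * n]}) : Prop :=
  exists c : 'I_n -> 'I_n -> 'I_n -> 'I_n -> {mpoly K[n * n]},
    p = (\sum_(i : 'I_n) \sum_(h : 'I_n | (i < h)%N)
          \sum_(j : 'I_n) \sum_(k : 'I_n | (j < k)%N) c i h j k * Hgen i h j k)%R.

Definition monomial (F : {set vertex}) : {mpoly K[n * n]} :=
  (\prod_(x in F) xv x.1 x.2)%R.

Definition face (F : {set vertex}) : Prop :=
  (forall x, x \in F -> x.1 != x.2) /\ ~ in_H (monomial F).

Definition facet (F : {set vertex}) : Prop :=
  face F /\ forall G, face G -> F \subset G -> G = F.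

Definition properR (R : {set 'I_n}) : bool := (R != set0) && (R != setT).
Definition faceR (R : {set 'I_n}) (F : {set vertex}) : Prop :=
  face F /\ F \subset setX R (~: R).
Definition facetR (R : {set 'I_n}) (F : {set vertex}) : Prop :=
  faceR R F /\ forall G, faceR R G -> F \subset G -> G = F.

(* The grid R x ([n] \ R): rows r_1 < ... < r_p, columns c_1 < ... < c_q. *)
Definition rowsN (R : {set 'I_n}) : seq nat := [seq val i | i <- enum R].
Definition colsN (R : {set 'I_n}) : seq nat := [seq val i | i <- enum (~: R)].

(* A path is encoded by its word of steps from bottom-left to top-right:
   true = vertical (up), false = horizontal (right). *)
Definition valid_word (R : {set 'I_n}) (w : seq bool) : bool :=
  (size w == (size (rowsN R)).-1 + (size (colsN R)).-1) &&
  (count id w == (size (rowsN R)).-1).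

(* The k-th point of the path (k = 0 is (r_p, c_1)), as a pair of nat labels. *)
Definition pt (R : {set 'I_n}) (w : seq bool) (k : nat) : nat * nat :=
  (nth 0 (rowsN R) ((size (rowsN R)).-1 - count id (take k w)),
   nth 0 (colsN R) (count negb (take k w))).

Definition path_set (R : {set 'I_n}) (w : seq bool) : {set vertex} :=
  [set x : vertex | (val x.1, val x.2) \in [seq pt R w k | k <- iota 0 (size w).+1]].

(* standard order of paths: at the first differing step, the smaller one goes up *)
Definition lexlt (w w' : seq bool) : bool :=
  [exists k : 'I_(size w), (take k w == take k w') && nth false w k && ~~ nth false w' k].

Definition pathlt (R : {set 'I_n}) (F G : {set vertex}) : Prop :=
  exists w w', [/\ valid_word R w, valid_word R w', path_set R w = F,
                   path_set R w' = G & lexlt w w'].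

Fixpoint seqlt (s t : seq nat) : bool :=
  match s, t with
  | [::], _ :: _ => true
  | a :: s', b :: t' => (a < b) || ((a == b) && seqlt s' t')
  | _, _ => false
  end.
Definition setlt (S R : {set 'I_n}) : bool := seqlt (rowsN S) (rowsN R).

Definition facet_lt (F G : {set vertex}) : Prop :=
  exists R S, [/\ properR R, properR S, facetR R F, facetR S G &
                  setlt R S \/ (R = S /\ pathlt R F G)].

Definition leftturn (w : seq bool) (k : nat) : bool :=
  [&& 0 < k, k < size w, ~~ nth false w k.-1 & nth false w k].
Definition rightturn (w : seq bool) (k : nat) : bool :=
  [&& 0 < k, k < size w, nth false w k.-1 & ~~ nth false w k].
Definition only_in_col (F : {set vertex}) (x : vertex) : bool :=
  [forall y in F, (y.2 == x.2) ==> (y == x)].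
Definition only_in_row (F : {set vertex}) (x : vertex) : bool :=
  [forall y in F, (y.1 == x.1) ==> (y == x)].
Definition maxR (R : {set 'I_n}) : nat := \max_(i in R) val i.

Definition minus_cond (R : {set 'I_n}) (w : seq bool) (k : nat) (x : vertex) : bool :=
  let F := path_set R w in
  let noturn := ~~ leftturn w k && ~~ rightturn w k in
  let bullet := noturn && only_in_col F x in
  let circ := noturn && ~~ only_in_col F x && only_in_row F x in
  [|| leftturn w k, bullet && (val x.2 < maxR R) | circ && (val x.1 == maxR R)].

Definition Fminus (R : {set 'I_n}) (w : seq bool) : {set vertex} :=
  [set x in path_set R w |
    [exists k : 'I_(size w).+1, (pt R w k == (val x.1, val x.2)) && minus_cond R w k x]].
Definition Fplus (R : {set 'I_n}) (w : seq bool) : {set vertex} :=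
  path_set R w :\: Fminus R w.

(* <F_1, ..., F_k> : the smallest simplicial complex containing the sets in P *)
Definition gen_cx (P : {set vertex} -> Prop) (A : {set vertex}) : Prop :=
  exists2 G, P G & A \subset G.

End H2n.

(* A set of off-diagonal positions is a face of Delta' iff, going down its rows, its
   columns never move right, and no index is both a row and a column of it.  Hence a
   facet with row set R is a lattice path in the grid R x ([n] \ R), encoded by its word
   of steps.  Let F be such a path.  An earlier facet G either has a smaller row set, and
   then it misses a point of F^- in a column of F or in the bottom row of F, or it is an
   earlier path of the same grid, and then it misses a left turn of F; so G never
   contains F^-.  Conversely, F minus a point x of F^- lies in an earlier facet: flip x
   if it is a left turn, otherwise move the lonely point x to a new row (turning its
   column into a row) or delete the bottom row.  The statement for F^+ is symmetric. *)

From mathcomp Require Import all_boot all_order all_algebra.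
From mathcomp Require Import mpoly zify.
Set Implicit Arguments.
Unset Strict Implicit.
Unset Printing Implicit Defensive.
Import GRing.Theory.

Lemma big_nested_pred1 (I : finType) (V : nmodType) (P : I -> I -> bool)
    (f : I -> I -> V) a0 b0 :
  P a0 b0 -> (forall a b, P a b -> (a, b) != (a0, b0) -> f a b = 0%R) ->
  (\sum_a \sum_(b | P a b) f a b = f a0 b0)%R.
Proof.
move=> P0 f0; rewrite (bigD1 a0) //= (bigD1 b0) //= big1 ?addr0 => [|b /andP[Pb nb]].
  rewrite big1 ?addr0 // => a na; apply: big1 => b Pb; apply: f0 => //.
  by rewrite xpair_eqE (negbTE na).
by apply: f0; rewrite // xpair_eqE eqxx.
Qed.

Section Faces.
Variables (K : fieldType) (n : nat).
Local Notation vertex := (vertex n).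

Definition sw_chain (G : {set vertex}) :=
  [forall x in G, forall y in G, (x.1 < y.1)%N ==> (y.2 <= x.2)%N].
Definition rowcol_disjoint (G : {set vertex}) := [forall x in G, forall y in G, x.1 != y.2].
Definition faceb G := sw_chain G && rowcol_disjoint G.

Lemma sw_chainP (G : {set vertex}) :
  reflect (forall x y, x \in G -> y \in G -> (x.1 < y.1)%N -> (y.2 <= x.2)%N) (sw_chain G).
Proof.
apply: (iffP forall_inP) => [cG x y xG yG|cG x xG].
  by move/forall_inP: (cG x xG) => /(_ y yG) /implyP; apply.
by apply/forall_inP => y yG; apply/implyP; apply: cG.
Qed.

Lemma rowcol_disjointP (G : {set vertex}) :
  reflect (forall x y, x \in G -> y \in G -> x.1 != y.2) (rowcol_disjoint G).
Proof.
apply: (iffP forall_inP) => [dG x y xG yG|dG x xG].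
  by move/forall_inP: (dG x xG) => /(_ y yG).
by apply/forall_inP => y yG; apply: dG.
Qed.

Lemma mxvec_index_pair_inj : injective (fun z : vertex => mxvec_index z.1 z.2).
Proof. by move=> [a b] [c d] /cast_ord_inj /enum_rank_inj. Qed.

Lemma in_H_pair (F : {set vertex}) (x y : vertex) (i h j k : 'I_n) :
  x \in F -> y \in F -> x != y -> (i < h)%N -> (j < k)%N ->
  Hgen K i h j k = (xv K x.1 x.2 * xv K y.1 y.2)%R -> in_H (monomial K F).
Proof.
move=> xF yF nxy ih jk gen_xy.
have [c monoF] : exists c, monomial K F = (c * (xv K x.1 x.2 * xv K y.1 y.2))%R.
  rewrite /monomial (bigD1 x) //= (bigD1 y) /=; last by rewrite yF eq_sym.
  by eexists; rewrite mulrA [RHS]mulrC.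
exists (fun i' h' j' k' => if ((i', h') == (i, h)) && ((j', k') == (j, k)) then c else 0%R).
rewrite (@big_nested_pred1 _ _ (fun a b : 'I_n => (a < b)%N) _ i h) //=; last first.
  move=> a b _ /negbTE nab; apply: big1 => j' _; apply: big1 => k' _.
  by rewrite nab mul0r.
rewrite (@big_nested_pred1 _ _ (fun a b : 'I_n => (a < b)%N) _ j k) //=; last first.
  by move=> a b _ /negbTE nab; rewrite nab andbF mul0r.
by rewrite !eqxx monoF gen_xy.
Qed.

Lemma face_faceb (F : {set vertex}) : face K F -> faceb F.
Proof.
move=> [offd nH].
have chainF : sw_chain F.
  apply/sw_chainP => x y xF yF lt1; rewrite leqNgt; apply/negP => lt2; apply: nH.
  apply: (@in_H_pair F x y x.1 y.1 x.2 y.2) => //.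
    by apply: contraTneq lt1 => ->; rewrite ltnn.
  by rewrite /Hgen (negbTE (offd _ xF)) (negbTE (offd _ yF)).
rewrite /faceb chainF; apply/rowcol_disjointP => -[a b] [c d] /= abF cdF.
apply/eqP => ad; subst d; have nab := offd _ abF; have nca := offd _ cdF.
have nxy : (a, b) != (c, a) by apply: contraNneq nca => -[->].
case: (ltngtP a c) => [ac|ca|/val_inj ac]; last by rewrite ac eqxx in nca.
- case: (ltngtP b a) => [ba|ab|/val_inj ba]; last by rewrite ba eqxx in nab.
    by move/sw_chainP: chainF => /(_ _ _ abF cdF ac) /=; rewrite leqNgt ba.
  by apply: nH; apply: (@in_H_pair F (a, b) (c, a) a c a b) => //; rewrite /Hgen eqxx.
- case: (ltngtP b a) => [ba|ab|/val_inj ba]; last by rewrite ba eqxx in nab.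
    apply: nH; apply: (@in_H_pair F (c, a) (a, b) c a b a) => //; first by rewrite eq_sym.
    by rewrite /Hgen eqxx orbT.
  by move/sw_chainP: chainF => /(_ _ _ cdF abF ca) /=; rewrite leqNgt ab.
Qed.

Lemma faceb_face (F : {set vertex}) : faceb F -> face K F.
Proof.
case/andP => /sw_chainP chF /rowcol_disjointP djF; split=> [x xF|[c monoF]]; first exact: djF.
(* Evaluate at the 0/1 indicator of F: the monomial becomes 1, every generator 0. *)
pose v := fun t : 'I_(n * n) =>
  if [exists z in F, mxvec_index z.1 z.2 == t] then 1%R else 0%R : K.
have vX (z : vertex) : (xv K z.1 z.2).@[v] = if z \in F then 1%R else 0%R.
  rewrite mevalXU /v; case: (boolP (z \in F)) => zF.
    by apply/ifT/exists_inP; exists z.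
  by case: exists_inP => // -[z' z'F /eqP/mxvec_index_pair_inj ez']; rewrite -ez' z'F in zF.
have evalD := big_morph _ (mevalD v) (meval0 v).
have : (monomial K F).@[v] = 1%R.
  rewrite /monomial (big_morph _ (mevalM v) (meval1 v)).
  by apply: big1 => x xF; rewrite vX xF.
rewrite monoF evalD big1 => [/esym/eqP|i _]; first by rewrite oner_eq0.
rewrite evalD big1 // => h ih; rewrite evalD big1 // => j _.
rewrite evalD big1 // => k jk; rewrite mevalM /Hgen.
case: ifP => [/orP E|_]; rewrite mevalM.
  rewrite (vX (i, k)) (vX (h, j)).
  case: ifP => f1; case: ifP => f2; rewrite ?mul0r ?mulr0 //.
  by case: E => /eqP E; [move: (djF _ _ f1 f2) | move: (djF _ _ f2 f1)]; rewrite /= E eqxx.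
rewrite (vX (i, j)) (vX (h, k)); case: ifP => f1; case: ifP => f2; rewrite ?mul0r ?mulr0 //.
by move: (chF _ _ f1 f2 ih); rewrite /= leqNgt jk.
Qed.

Lemma faceP (F : {set vertex}) : face K F <-> faceb F.
Proof. by split; [apply: face_faceb | apply: faceb_face]. Qed.

End Faces.

Section Facets.
Variables (K : fieldType) (n : nat).
Local Notation vertex := (vertex n).

Lemma faceb_subset (G H : {set vertex}) : faceb G -> H \subset G -> faceb H.
Proof.
case/andP=> /sw_chainP cG /rowcol_disjointP dG /subsetP HG; apply/andP; split.
  by apply/sw_chainP => x y /HG xG /HG yG; apply: cG.
by apply/rowcol_disjointP => x y /HG xG /HG yG; apply: dG.
Qed.

Lemma facetP (G : {set vertex}) :
  facet K G <-> faceb G /\ (forall G', faceb G' -> G \subset G' -> G' = G).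
Proof.
split=> [[/faceP fG maxG]|[fG maxG]]; split=> //; first by move=> G' /(faceP K); apply: maxG.
- exact/faceP.
- by move=> G' /faceP; apply: maxG.
Qed.

Lemma faceb_sub_facet (H : {set vertex}) : faceb H -> exists2 G, facet K G & H \subset G.
Proof.
move=> fH; have Hok : faceb H && (H \subset H) by rewrite fH subxx.
have [G /andP[fG HG] Gmax] := @arg_maxnP _ H
  (fun G : {set vertex} => faceb G && (H \subset G)) (fun G => #|G|) Hok.
exists G => //; apply/facetP; split=> // G' fG' GG'.
have cG : #|G'| <= #|G| by apply: Gmax; rewrite fG' (subset_trans HG GG').
by apply/esym/eqP; rewrite eqEcard GG' cG.
Qed.

Definition rowsof (G : {set vertex}) : {set 'I_n} := [set i | [exists j, (i, j) \in G]].

Lemma facet_rowsof (G : {set vertex}) x : facet K G -> x \in G ->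
  properR (rowsof G) /\ facetR K (rowsof G) G.
Proof.
move=> fG xG; have [/andP[_ /rowcol_disjointP dG] _] := (facetP G).1 fG.
have /subsetP sub : G \subset setX (rowsof G) (~: rowsof G).
  apply/subsetP => -[a b] abG; rewrite !inE /=; apply/andP; split.
    by apply/existsP; exists b.
  by apply/existsP => -[j bjG]; move: (dG _ _ bjG abG); rewrite eqxx.
split; last by split=> [|G' [fG' _]]; [split; [case: fG | apply/subsetP] | apply: fG.2].
case: x xG => a b /sub; rewrite in_setX in_setC /properR => /andP[x1 x2].
by apply/andP; split; apply: contraTneq x1 => E; rewrite E ?inE // in x2 *.
Qed.

Lemma rowsof_eq (H G : {set vertex}) (T : {set 'I_n}) : faceb G -> H \subset G ->
  (forall i, i \in T -> exists j, (i, j) \in H) ->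
  (forall i, i \notin T -> exists j, (j, i) \in H) -> rowsof G = T.
Proof.
case/andP => _ /rowcol_disjointP dG /subsetP HG rowT colT; apply/setP => i; rewrite inE.
case: (boolP (i \in T)) => iT; first by have [j /HG ijG] := rowT _ iT; apply/existsP; exists j.
have [j /HG jiG] := colT _ iT; apply/existsP => -[j' ij'G].
by move: (dG _ _ ij'G jiG); rewrite eqxx.
Qed.

Lemma faceb_add_row (G : {set vertex}) (t : 'I_n) x0 : faceb G -> x0 \in G ->
  (forall z, z \in G -> z.1 != t) -> (forall z, z \in G -> z.2 != t) ->
  exists d, faceb ((t, d) |: G).
Proof.
case/andP=> /sw_chainP cG /rowcol_disjointP dG x0G rowt colt.
have add_ok (d : 'I_n) :
    (forall z, z \in G -> (z.1 < t)%N -> (d <= z.2)%N) ->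
    (forall z, z \in G -> (t < z.1)%N -> (z.2 <= d)%N) ->
    (exists2 z, z \in G & z.2 = d) -> faceb ((t, d) |: G).
  move=> above below [z0 z0G z0d]; apply/andP; split.
    apply/sw_chainP => x y; rewrite !inE => /predU1P[->|xG] /predU1P[->|yG] //=.
    - by move=> ty; apply: below.
    - by move=> xt; apply: above.
    - exact: cG.
  apply/rowcol_disjointP => x y; rewrite !inE => /predU1P[->|xG] /predU1P[->|yG] /=.
  - by rewrite -z0d eq_sym colt.
  - by rewrite eq_sym colt.
  - by rewrite -z0d dG.
  - exact: dG.
(* Take the column of the lowest point above row t, or else of the highest point. *)
case: (boolP [exists z in G, (z.1 < t)%N]) => [/exists_inP[z1 z1G z1t]|noabove].
  have [a /andP[aG at0] amin] := @arg_minnP _ z1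
    (fun z : vertex => (z \in G) && (z.1 < t)%N) (fun z => val z.2) (introT andP (conj z1G z1t)).
  exists a.2; apply: add_ok; last by exists a.
    by move=> z zG zt; apply: amin; rewrite zG.
  by move=> z zG tz; apply: cG => //; apply: ltn_trans tz.
have tx0 : (t < x0.1)%N.
  rewrite ltn_neqAle eq_sym rowt // leqNgt /=.
  by apply: contra noabove => x0t; apply/exists_inP; exists x0.
have [b /andP[bG tb] bmax] := @arg_maxnP _ x0
  (fun z : vertex => (z \in G) && (t < z.1)%N) (fun z => val z.2) (introT andP (conj x0G tx0)).
exists b.2; apply: add_ok; last by exists b.
  by move=> z zG zt; case/exists_inP: noabove; exists z.
by move=> z zG tz; apply: bmax; rewrite zG.
Qed.

(* Transposition preserves faces, which reduces adding a column to adding a row. *)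
Definition transpose_set (G : {set vertex}) : {set vertex} := [set z | (z.2, z.1) \in G].

Lemma transpose_setK : involutive transpose_set.
Proof. by move=> G; apply/setP => -[a b]; rewrite !inE. Qed.

Lemma transpose_setU1 (G : {set vertex}) (a b : 'I_n) :
  transpose_set ((a, b) |: G) = (b, a) |: transpose_set G.
Proof. by apply/setP => -[c d]; rewrite !inE !xpair_eqE andbC. Qed.

Lemma faceb_transpose (G : {set vertex}) : faceb (transpose_set G) = faceb G.
Proof.
suff imp H : faceb H -> faceb (transpose_set H).
  by apply/idP/idP => [/imp|/imp //]; rewrite transpose_setK.
case/andP => /sw_chainP cH /rowcol_disjointP dH; apply/andP; split.
  apply/sw_chainP => -[a b] [c d]; rewrite !inE /= => abH cdH ac.
  by rewrite leqNgt; apply: contraTN ac => bd; rewrite -leqNgt (cH _ _ abH cdH bd).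
apply/rowcol_disjointP => -[a b] [c d]; rewrite !inE /= eq_sym => abH cdH.
exact: dH cdH abH.
Qed.

Lemma faceb_add_col (G : {set vertex}) (t : 'I_n) x0 : faceb G -> x0 \in G ->
  (forall z, z \in G -> z.1 != t) -> (forall z, z \in G -> z.2 != t) ->
  exists d, faceb ((d, t) |: G).
Proof.
rewrite -faceb_transpose => fG x0G rowt colt.
have x0G' : (x0.2, x0.1) \in transpose_set G by rewrite inE -surjective_pairing.
have [d fd] : exists d, faceb ((t, d) |: transpose_set G).
  by apply: faceb_add_row fG x0G' _ _ => z; rewrite inE => /[dup] /colt ? /rowt.
by exists d; rewrite -faceb_transpose transpose_setU1.
Qed.

Definition grid_spanning (R : {set 'I_n}) (F : {set vertex}) :=
  [/\ F \subset setX R (~: R), forall r, r \in R -> exists c, (r, c) \in F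
    & forall c, c \notin R -> exists r, (r, c) \in F].

Lemma exchange_col (R : {set 'I_n}) (F : {set vertex}) (x : vertex) :
  faceb F -> grid_spanning R F -> x \in F -> only_in_col F x -> ~~ only_in_row F x ->
  exists2 G, facet K G & F :\ x \subset G /\ rowsof G = x.2 |: R.
Proof.
move=> fF [/subsetP sub rowsF colsF] xF /forall_inP colx.
case/forall_inPn => y yF; rewrite negb_imply => /andP[/eqP yrow yx].
have yFx : y \in F :\ x by rewrite in_setD1 yx.
have [d fd] : exists d, faceb ((x.2, d) |: F :\ x).
  apply: faceb_add_row (faceb_subset fF (subD1set F x)) yFx _ _ => z /setD1P[zx zF].
    have := sub _ xF; have := sub _ zF; rewrite !inE.
    by case/andP => z1R _ /andP[_]; apply: contraNneq => <-.
  by apply: contraNneq zx => z2; apply/eqP; move: (colx _ zF); rewrite z2 eqxx => /eqP.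
have [G fG subG] := faceb_sub_facet fd.
exists G => //; split; first exact: subset_trans (subsetUr _ _) subG.
apply: (rowsof_eq _ subG) => [|i|i]; first by case: ((facetP G).1 fG).
  case/setU1P => [->|/rowsF [c icF]]; first by exists d; rewrite setU11.
  case: (eqVneq (i, c) x) => [icx|icx]; last by exists c; rewrite !inE icx icF orbT.
  exists y.2; have -> : (i, y.2) = y by rewrite [y]surjective_pairing yrow -icx.
  by rewrite !inE yx yF orbT.
rewrite in_setU1 negb_or => /andP[ix /colsF [r riF]]; exists r.
by rewrite !inE riF andbT; apply/orP; right; apply: contraNneq ix => <-.
Qed.

Lemma exchange_row (R : {set 'I_n}) (F : {set vertex}) (x : vertex) :
  faceb F -> grid_spanning R F -> x \in F -> only_in_row F x -> ~~ only_in_col F x ->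
  exists2 G, facet K G & F :\ x \subset G /\ rowsof G = R :\ x.1.
Proof.
move=> fF [/subsetP sub rowsF colsF] xF /forall_inP rowx.
case/forall_inPn => y yF; rewrite negb_imply => /andP[/eqP ycol yx].
have yFx : y \in F :\ x by rewrite in_setD1 yx.
have [d fd] : exists d, faceb ((d, x.1) |: F :\ x).
  apply: faceb_add_col (faceb_subset fF (subD1set F x)) yFx _ _ => z /setD1P[zx zF].
    by apply: contraNneq zx => z1; apply/eqP; move: (rowx _ zF); rewrite z1 eqxx => /eqP.
  have := sub _ xF; have := sub _ zF; rewrite !inE.
  by case/andP => _ z2R /andP[x1R _]; apply: contraNneq z2R => ->.
have [G fG subG] := faceb_sub_facet fd.
exists G => //; split; first exact: subset_trans (subsetUr _ _) subG.
apply: (rowsof_eq _ subG) => [|i|i]; first by case: ((facetP G).1 fG).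
  case/setD1P => ix /rowsF [c icF]; exists c.
  by rewrite !inE icF andbT; apply/orP; right; apply: contraNneq ix => <-.
rewrite in_setD1 negb_and negbK => /orP[/eqP ->|/colsF [r riF]]; first by exists d; rewrite setU11.
case: (eqVneq (r, i) x) => [rix|rix]; last by exists r; rewrite !inE rix riF orbT.
exists y.1; have -> : (y.1, i) = y by rewrite [y]surjective_pairing ycol -rix.
by rewrite !inE yx yF orbT.
Qed.

End Facets.

Lemma gen_cx_meet_facet (n : nat) (P : {set vertex n} -> Prop) (F X : {set vertex n}) :
  (forall G, P G -> ~~ (X \subset G)) ->
  (forall x, x \in X -> exists2 G, P G & F :\ x \subset G) ->
  forall A, gen_cx (fun G => G = F) A /\ gen_cx P A <->
            gen_cx (fun G => exists2 x, x \in X & G = F :\ x) A.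
Proof.
move=> missX coverX A; split=> [[[_ -> AF] [G PG AG]] | [_ [x xX ->] AFx]].
  have /subsetPn [x xX xG] := missX G PG.
  exists (F :\ x); first by exists x.
  apply/subsetP => a aA; rewrite in_setD1 (subsetP AF _ aA) andbT.
  by apply: contraNneq xG => <-; apply: (subsetP AG).
split; first by exists F => //; apply: subset_trans AFx (subD1set _ _).
by have [G PG FxG] := coverX x xX; exists G => //; apply: subset_trans AFx FxG.
Qed.

Lemma seqlt_irr s : seqlt s s = false.
Proof. by elim: s => //= a s ->; rewrite ltnn eqxx. Qed.

Lemma seqlt_cons_min (a : nat) x y : (forall b, b \in y -> a < b) ->
  seqlt (a :: x) y = (y != [::]).
Proof. by case: y => [|b y] //= gt_a; rewrite gt_a ?mem_head. Qed.

Lemma seqlt_min_cons (a : nat) x y : (forall b, b \in x -> a < b) ->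
  seqlt x (a :: y) = (x == [::]).
Proof.
case: x => [|b x] //= gt_a; have ab := gt_a b (mem_head _ _).
by rewrite ltnNge (ltnW ab) (gtn_eqF ab).
Qed.

Lemma seqlt_filter (T : eqType) (f : T -> nat) (s : seq T) (P Q : pred T) m :
  sorted (fun a b => f a < f b) s -> m \in s ->
  {in s, forall j, f j < f m -> P j = Q j} -> P m != Q m ->
  seqlt [seq f x | x <- s & P x] [seq f x | x <- s & Q x] =
  if P m then has (fun j => (f m < f j) && Q j) s else ~~ has (fun j => (f m < f j) && P j) s.
Proof.
elim: s => // a s IH sorted_as; rewrite inE => m_as agree PQm.
have /allP a_min : all (fun b => f a < f b) s.
  exact: order_path_min (fun y x z => @ltn_trans (f y) (f x) (f z)) sorted_as.
have filter_gt (R : pred T) b : b \in [seq f x | x <- s & R x] -> f a < b.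
  by case/mapP => x; rewrite mem_filter => /andP[_ /a_min ?] ->.
have has_gt (R : pred T) : has (fun j => (f a < f j) && R j) s = has R s.
  by apply: eq_in_has => j /a_min ->.
have filter_cons (R : pred T) : filter R (a :: s) = if R a then a :: filter R s else filter R s.
  by [].
rewrite !filter_cons.
case: (eqVneq m a) m_as agree PQm => [-> _ _ | ma /= ms agree PQm].
  rewrite /= ltnn /= !has_gt; case: (P a); case: (Q a) => // _; rewrite map_cons.
    by rewrite seqlt_cons_min ?has_filter; [case: filter | apply: filter_gt].
  by rewrite seqlt_min_cons ?has_filter; [case: filter | apply: filter_gt].
have am : f a < f m by apply: a_min.
rewrite ltnNge (ltnW am) /= -(agree a (mem_head _ _) am).
rewrite -IH ?(path_sorted sorted_as) // => [|j js]; last by apply: agree; rewrite inE js orbT.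
by case: (P a); rewrite //= ltnn eqxx.
Qed.

Section SetOrder.
Variable n : nat.
Implicit Types S R : {set 'I_n}.

Lemma rowsN_filter S : rowsN S = [seq val x | x <- enum 'I_n & x \in S].
Proof. by rewrite /rowsN -deprecated_filter_index_enum enumT. Qed.

Lemma setltE S R (m : 'I_n) :
  (forall j : 'I_n, j < m -> (j \in S) = (j \in R)) -> (m \in S) != (m \in R) ->
  setlt S R = if m \in S then [exists j : 'I_n, (m < j) && (j \in R)]
              else ~~ [exists j : 'I_n, (m < j) && (j \in S)].
Proof.
move=> agree mSR; rewrite /setlt !rowsN_filter (@seqlt_filter _ val _ _ _ m) //.
- have hasE (p : pred 'I_n) : has p (enum 'I_n) = [exists j : 'I_n, p j].
    by apply/hasP/existsP => [[j _ pj] | [j pj]]; exists j; rewrite ?mem_enum.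
  by rewrite !hasE.
- by have := iota_ltn_sorted 0 n; rewrite -val_enum_ord sorted_map.
- by rewrite mem_enum.
- by move=> j _; apply: agree.
Qed.

Lemma setlt_neq S R : setlt S R -> S != R.
Proof. by apply: contraTneq => ->; rewrite /setlt seqlt_irr. Qed.

Lemma setlt_first_diff S R : S != R -> exists m : 'I_n,
  (forall j : 'I_n, j < m -> (j \in S) = (j \in R)) /\ (m \in S) != (m \in R).
Proof.
move=> neqSR; have /existsP [x Sx] : [exists x, (x \in S) != (x \in R)].
  apply: contraNT neqSR; rewrite negb_exists => /forallP eqSR.
  by apply/eqP/setP => x; apply/eqP/negPn/eqSR.
have [m Sm m_min] := @arg_minnP _ x (fun i => (i \in S) != (i \in R)) val Sx.
exists m; split=> // j jm; apply/eqP/negPn; apply: contraTN jm => Sj.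
by rewrite -leqNgt m_min.
Qed.

Lemma neq_of_lt (i j : 'I_n) : i < j -> i != j.
Proof. by apply: contraTneq => ->; rewrite ltnn. Qed.

Lemma setlt_setU1_lt S (c : 'I_n) :
  c \notin S -> [exists j : 'I_n, (c < j) && (j \in S)] -> setlt (c |: S) S.
Proof.
move=> cS above; rewrite (setltE (m := c)) ?setU11 ?(negbTE cS) //.
by move=> j /neq_of_lt jc; rewrite in_setU1 (negbTE jc).
Qed.

Lemma setlt_setU1_gt S (c : 'I_n) :
  c \notin S -> (forall j, j \in S -> j < c) -> setlt S (c |: S).
Proof.
move=> cS below; rewrite (setltE (m := c)) ?setU11 ?(negbTE cS) //.
  by apply/existsP => -[j /andP[cj /below]]; rewrite ltnNge (ltnW cj).
by move=> j /neq_of_lt jc; rewrite in_setU1 (negbTE jc).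
Qed.

Lemma setlt_setD1_max S (r : 'I_n) :
  r \in S -> (forall j, j \in S -> j <= r) -> setlt (S :\ r) S.
Proof.
move=> rS below; rewrite (setltE (m := r)) ?setD11 ?rS //.
  by apply/existsP => -[j /andP[rj /setD1P[_ /below]]]; rewrite leqNgt rj.
by move=> j /neq_of_lt jr; rewrite in_setD1 jr.
Qed.

Lemma setlt_setD1_lt S (r : 'I_n) :
  r \in S -> [exists j : 'I_n, (r < j) && (j \in S)] -> setlt S (S :\ r).
Proof.
move=> rS /existsP[j /andP[rj jS]]; rewrite (setltE (m := r)) ?setD11 ?rS //.
  by apply/existsP; exists j; rewrite rj in_setD1 eq_sym neq_of_lt.
by move=> i /neq_of_lt ir; rewrite in_setD1 ir.
Qed.

End SetOrder.

Lemma nat_ivt (f : nat -> nat) N v : f 0 = 0 -> (forall k, k < N -> f k.+1 <= (f k).+1) ->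
  v <= f N -> exists2 k, k <= N & f k = v.
Proof.
move=> f0 st; elim: N st => [|N IH] st vN.
  by exists 0 => //; move: vN; rewrite f0; case: v.
case: (leqP v (f N)) => vfN.
  by have [k kN fk] := IH (fun k kN => st k (ltnW kN)) vfN; exists k => //; apply: leqW.
exists N.+1 => //; have := st N (ltnSn N); lia.
Qed.

Definition ups (s : seq bool) k := count id (take k s).
Definition rights (s : seq bool) k := count negb (take k s).

Lemma ups_add_rights s k : ups s k + rights s k = minn k (size s).
Proof.
rewrite /ups /rights (count_predC id) size_take; case: ltnP => h; lia.
Qed.

Lemma ups0 s : ups s 0 = 0. Proof. by rewrite /ups take0. Qed.
Lemma rights0 s : rights s 0 = 0. Proof. by rewrite /rights take0. Qed.

Lemma count_take_leq (a : pred bool) s k k' : k <= k' ->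
  count a (take k s) <= count a (take k' s).
Proof.
move=> kk; rewrite -(subnKC kk) takeD count_cat; apply: leq_addr.
Qed.

Lemma ups_mono s k k' : k <= k' -> ups s k <= ups s k'.
Proof. exact: count_take_leq. Qed.
Lemma rights_mono s k k' : k <= k' -> rights s k <= rights s k'.
Proof. exact: count_take_leq. Qed.

Lemma upsS s k : k < size s -> ups s k.+1 = ups s k + nth false s k.
Proof. by move=> ks; rewrite /ups (take_nth false ks) -cats1 count_cat /= addn0. Qed.
Lemma rightsS s k : k < size s -> rights s k.+1 = rights s k + ~~ nth false s k.
Proof. by move=> ks; rewrite /rights (take_nth false ks) -cats1 count_cat /= addn0. Qed.

Lemma ups_oversize s k : size s <= k -> ups s k = count id s.
Proof. by move=> h; rewrite /ups take_oversize. Qed.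
Lemma rights_oversize s k : size s <= k -> rights s k = count negb s.
Proof. by move=> h; rewrite /rights take_oversize. Qed.

Lemma count_take_const (a : pred bool) w j m : j <= m ->
  (forall i, j <= i -> i < m -> ~~ a (nth false w i)) -> count a (take m w) = count a (take j w).
Proof.
move=> jm noa; rewrite -(subnKC jm) takeD count_cat -[RHS]addn0; congr addn.
apply/eqP; rewrite -leqn0 leqNgt -has_count; apply/hasPn => b /(nthP false) [i].
rewrite size_take size_drop => ilt <-.
have im : i < m - j by move: ilt; case: ifP => [_ | /negbT]; rewrite -?leqNgt; lia.
by rewrite nth_take // nth_drop; apply: noa; lia.
Qed.

Lemma ups_const w j m : j <= m ->
  (forall i, j <= i -> i < m -> nth false w i = false) -> ups w m = ups w j.
Proof. by move=> jm flat; apply: count_take_const => // i ji im; rewrite flat. Qed.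

Lemma rights_const w j m : j <= m ->
  (forall i, j <= i -> i < m -> nth false w i = true) -> rights w m = rights w j.
Proof. by move=> jm flat; apply: count_take_const => // i ji im; rewrite flat. Qed.

(* Moves the turn at point [k] to the opposite corner of its unit square. *)
Definition flip_turn w k b := take k.-1 w ++ [:: b, ~~ b & drop k.+1 w].

Section FlipTurn.
Variables (w : seq bool) (k : nat) (b : bool).
Hypotheses (k_gt0 : 0 < k) (k_lt : k < size w)
  (step_in : nth false w k.-1 = ~~ b) (step_out : nth false w k = b).

Lemma flip_turn_decomp : w = take k.-1 w ++ [:: ~~ b, b & drop k.+1 w].
Proof.
rewrite -{1}(cat_take_drop k.-1 w) -step_in -step_out (drop_nth false); last lia.
by rewrite prednK // (drop_nth false).
Qed.

Lemma size_take_pred : size (take k.-1 w) = k.-1.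
Proof. by rewrite size_take ifT //; lia. Qed.

Lemma flip_turn_count (a : pred bool) k' : k' != k ->
  count a (take k' (flip_turn w k b)) = count a (take k' w).
Proof.
move=> k'k; rewrite {2}flip_turn_decomp /flip_turn !take_cat size_take_pred.
case: ltnP => // h; rewrite !count_cat; congr addn.
by case E: (k' - k.-1) => [|[|d]] //=; [lia | rewrite addnCA].
Qed.

Lemma size_flip_turn : size (flip_turn w k b) = size w.
Proof. by rewrite {2}flip_turn_decomp /flip_turn !size_cat. Qed.

Lemma flip_turn_count_all (a : pred bool) : count a (flip_turn w k b) = count a w.
Proof.
have := @flip_turn_count a (size w); rewrite neq_ltn k_lt orbT.
by rewrite !take_oversize ?size_flip_turn //; apply.
Qed.

Lemma lexlt_flip_turn : if b then lexlt (flip_turn w k b) w else lexlt w (flip_turn w k b).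
Proof.
have lt_flip : k.-1 < size (flip_turn w k b) by rewrite size_flip_turn; lia.
have lt_w : k.-1 < size w by lia.
have take_flip : take k.-1 (flip_turn w k b) = take k.-1 w.
  by rewrite /flip_turn take_cat size_take_pred ltnn subnn take0 cats0.
have nth_flip : nth false (flip_turn w k b) k.-1 = b.
  by rewrite /flip_turn nth_cat size_take_pred ltnn subnn.
move: lt_flip take_flip nth_flip; case: b step_in => /= step lt_flip take_flip nth_flip.
all: apply/existsP.
  by exists (Ordinal lt_flip); rewrite /= take_flip nth_flip step eqxx.
by exists (Ordinal lt_w); rewrite /= take_flip nth_flip step eqxx.
Qed.

End FlipTurn.

Lemma seq_first_diff (T : eqType) (x0 : T) (s1 s2 : seq T) :
  size s1 = size s2 -> s1 != s2 ->
  exists j, [/\ j < size s1, take j s1 = take j s2 & nth x0 s1 j != nth x0 s2 j].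
Proof.
elim: s1 s2 => [|a s1 IH] [|b s2] //= [ss]; case: (eqVneq a b) => [<- | ab] neq.
  have [|j [js tk nj]] := IH s2 ss; first by apply: contraNneq neq => ->.
  by exists j.+1; rewrite /= tk.
by exists 0; rewrite take0.
Qed.

Lemma lexlt_total (s1 s2 : seq bool) : size s1 = size s2 -> s1 != s2 ->
  lexlt s1 s2 || lexlt s2 s1.
Proof.
move=> ss /(seq_first_diff false ss) [j [js tk nj]].
have js2 : j < size s2 by rewrite -ss.
case/boolP: (nth false s1 j) nj => s1j nj; apply/orP; [left | right]; apply/existsP.
  by exists (Ordinal js); rewrite /= tk eqxx s1j; case: nth nj.
by exists (Ordinal js2); rewrite /= tk eqxx s1j andbT; case: nth nj.
Qed.

Section EnumNth.
Variable n' : nat.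
Local Notation n := n'.+1.

Lemma sorted_val_enum (S : {set 'I_n}) : sorted ltn (map val (enum S)).
Proof.
rewrite -deprecated_filter_index_enum sorted_map.
apply: sorted_filter; first by move=> ???; apply: ltn_trans.
rewrite -sorted_map.
have -> : index_enum 'I_n = enum 'I_n by rewrite enumT.
rewrite val_enum_ord. exact: iota_ltn_sorted.
Qed.

Lemma nth_enum_lt (S : {set 'I_n}) a b : a < b -> b < #|S| ->
  val (nth ord0 (enum S) a) < val (nth ord0 (enum S) b).
Proof.
move=> ab bS; have aS := ltn_trans ab bS.
rewrite -!(nth_map ord0 0 val) -?cardE //.
apply: (sorted_ltn_nth ltn_trans) => //; first exact: sorted_val_enum.
  by rewrite inE size_map -cardE.
by rewrite inE size_map -cardE.
Qed.

Lemma nth_enum_ltE (S : {set 'I_n}) a b : a < #|S| -> b < #|S| ->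
  (val (nth ord0 (enum S) a) < val (nth ord0 (enum S) b)) = (a < b).
Proof.
move=> aS bS; case: (ltngtP a b) => [ab|ba|->]; first by rewrite nth_enum_lt.
  by apply/negbTE; rewrite -leqNgt ltnW // nth_enum_lt.
by rewrite ltnn.
Qed.

Lemma nth_enum_inj (S : {set 'I_n}) a b : a < #|S| -> b < #|S| ->
  nth ord0 (enum S) a = nth ord0 (enum S) b -> a = b.
Proof.
move=> aS bS E; case: (ltngtP a b) => // h.
  by move: (nth_enum_lt h bS); rewrite E ltnn.
by move: (nth_enum_lt h aS); rewrite E ltnn.
Qed.

Lemma mem_nth_enum (S : {set 'I_n}) a : a < #|S| -> nth ord0 (enum S) a \in S.
Proof. by move=> aS; rewrite -mem_enum mem_nth // -cardE. Qed.

Lemma nth_enum_index (S : {set 'I_n}) r : r \in S -> exists2 a, a < #|S| & r = nth ord0 (enum S) a.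
Proof.
move=> rS; exists (index r (enum S)); first by rewrite cardE index_mem mem_enum.
by rewrite nth_index // mem_enum.
Qed.

End EnumNth.

(* [lia] compares atoms syntactically, while [#|R|] occurs in several convertible forms. *)
Ltac card_lia := repeat match goal with H : context [#|_|] |- _ => revert H end;
  repeat match goal with |- context [#|?A|] => let P := fresh "P" in move: (#|A|) => P end;
  intros; lia.

Section Paths.
Variables (K : fieldType) (n' : nat).
Local Notation n := n'.+1.
Local Notation vertex := (vertex n).
Variable R : {set 'I_n}.
Hypothesis pR : properR R.

Local Notation p := #|R|.
Local Notation q := #|~: R|.

Definition grid_row a := nth ord0 (enum R) a.
Definition grid_col b := nth ord0 (enum (~: R)) b.
Definition gridpt (s : seq bool) k : vertex := (grid_row (p.-1 - ups s k), grid_col (rights s k)).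

Lemma card_rows_gt0 : 0 < p.
Proof.
case/andP: pR => /set0Pn [x xR] _; apply/card_gt0P; by exists x.
Qed.
Lemma card_cols_gt0 : 0 < q.
Proof.
case/andP: pR => _ nT; apply/card_gt0P.
have [x xR] : exists x, x \notin R.
  apply/existsP; apply: contraR nT; rewrite negb_exists => /forallP H.
  by apply/eqP/setP => x; rewrite inE; move: (H x); rewrite negbK.
by exists x; rewrite inE.
Qed.

Lemma size_rowsN : size (rowsN R) = p. Proof. by rewrite size_map cardE. Qed.
Lemma size_colsN : size (colsN R) = q. Proof. by rewrite size_map cardE. Qed.

Section Word.
Variable w : seq bool.
Hypothesis vw : valid_word R w.

Lemma size_word : size w = p.-1 + q.-1.
Proof. by case/andP: vw; rewrite size_rowsN size_colsN => /eqP. Qed.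
Lemma count_ups_word : count id w = p.-1.
Proof. by case/andP: vw; rewrite size_rowsN => _ /eqP. Qed.
Lemma count_rights_word : count negb w = q.-1.
Proof.
have h := count_predC id w; rewrite count_ups_word size_word in h.
have -> : count negb w = count (predC id) w by apply: eq_count.
lia.
Qed.

Lemma ups_le k : ups w k <= p.-1.
Proof.
by rewrite -count_ups_word -(@ups_oversize w (maxn k (size w))) ?leq_maxr ?ups_mono ?leq_maxl.
Qed.
Lemma rights_le k : rights w k <= q.-1.
Proof.
by rewrite -count_rights_word -(@rights_oversize w (maxn k (size w))) ?leq_maxr ?rights_mono ?leq_maxl.
Qed.
Lemma ups_end : ups w (size w) = p.-1.
Proof. by rewrite -count_ups_word ups_oversize. Qed.
Lemma rights_end : rights w (size w) = q.-1.
Proof. by rewrite -count_rights_word rights_oversize. Qed.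

Lemma row_idx_lt k : p.-1 - ups w k < p.
Proof. have := card_rows_gt0; lia. Qed.
Lemma col_idx_lt k : rights w k < q.
Proof. have := card_cols_gt0; have := rights_le k; lia. Qed.

Lemma pt_gridpt k : pt R w k = (val (gridpt w k).1, val (gridpt w k).2).
Proof.
rewrite /pt size_rowsN /rowsN /colsN /gridpt /grid_row /grid_col.
rewrite !(nth_map ord0) //; rewrite -cardE.
  exact: col_idx_lt.
exact: row_idx_lt.
Qed.

Lemma vertex_val_inj (x y : vertex) : (val x.1, val x.2) = (val y.1, val y.2) -> x = y.
Proof. by case: x y => [a b] [c d] /= [/val_inj -> /val_inj ->]. Qed.

Lemma path_setP x : x \in path_set R w <-> exists2 k, k <= size w & x = gridpt w k.
Proof.
rewrite /path_set inE; split.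
  case/mapP => k; rewrite mem_iota add0n ltnS => kw; rewrite pt_gridpt => /vertex_val_inj ->.
  by exists k.
case=> k kw ->; apply/mapP; exists k; last by rewrite pt_gridpt.
by rewrite mem_iota add0n ltnS.
Qed.

Lemma gridpt_in k : k <= size w -> gridpt w k \in path_set R w.
Proof. by move=> kw; apply/path_setP; exists k. Qed.

Lemma gridpt_row_in k : (gridpt w k).1 \in R.
Proof. by apply: mem_nth_enum; apply: row_idx_lt. Qed.
Lemma gridpt_col_notin k : (gridpt w k).2 \notin R.
Proof.
have := mem_nth_enum (col_idx_lt k); rewrite inE; done.
Qed.

Lemma gridpt_row_ltE k k' : (val (gridpt w k).1 < val (gridpt w k').1) = (ups w k' < ups w k).
Proof.
rewrite /gridpt /= /grid_row nth_enum_ltE; try exact: row_idx_lt.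
have h1 := ups_le k; have h2 := ups_le k'; have h3 := card_rows_gt0.
set P := #|R| in h1 h2 h3 *; set a := ups w k in h1 *; set b := ups w k' in h2 *.
apply/idP/idP => ?; lia.
Qed.

Lemma gridpt_row_eqE k k' : ((gridpt w k).1 == (gridpt w k').1) = (ups w k == ups w k').
Proof.
apply/eqP/eqP => [E|E]; last by rewrite /gridpt /= E.
have := nth_enum_inj (row_idx_lt k) (row_idx_lt k') E.
have := ups_le k; have := ups_le k'; lia.
Qed.

Lemma gridpt_col_ltE k k' :
  (val (gridpt w k).2 < val (gridpt w k').2) = (rights w k < rights w k').
Proof. by rewrite /gridpt /= /grid_col nth_enum_ltE //; apply: col_idx_lt. Qed.

Lemma gridpt_col_eqE k k' : ((gridpt w k).2 == (gridpt w k').2) = (rights w k == rights w k').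
Proof.
apply/eqP/eqP => [E|E]; last by rewrite /gridpt /= E.
exact: nth_enum_inj (col_idx_lt k) (col_idx_lt k') E.
Qed.

Lemma gridpt_inj k k' : k <= size w -> k' <= size w -> gridpt w k = gridpt w k' -> k = k'.
Proof.
move=> kw k'w E; have /eqP E1 : ups w k == ups w k' by rewrite -gridpt_row_eqE E.
have /eqP E2 : rights w k == rights w k' by rewrite -gridpt_col_eqE E.
have := ups_add_rights w k; have := ups_add_rights w k'; rewrite E1 E2; lia.
Qed.

Lemma upsS_le k : ups w k.+1 <= (ups w k).+1.
Proof.
case: (ltnP k (size w)) => h; first by rewrite upsS //; case: nth; rewrite ?addn1 ?addn0.
by rewrite !ups_oversize // ltnW.
Qed.
Lemma rightsS_le k : rights w k.+1 <= (rights w k).+1.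
Proof.
case: (ltnP k (size w)) => h; first by rewrite rightsS //; case: nth; rewrite ?addn1 ?addn0.
by rewrite !rights_oversize // ltnW.
Qed.

Lemma path_cover_row r : r \in R -> exists2 k, k <= size w & (gridpt w k).1 = r.
Proof.
move=> /nth_enum_index [a ap ->].
have hv : p.-1 - a <= ups w (size w) by rewrite ups_end leq_subr.
have [k kw Uk] := @nat_ivt (ups w) (size w) (p.-1 - a) (ups0 w) (fun k _ => upsS_le k) hv.
exists k => //; rewrite /gridpt /= Uk /grid_row; congr nth; move: ap; move: (#|R|) => P; lia.
Qed.

Lemma path_cover_col c : c \notin R -> exists2 k, k <= size w & (gridpt w k).2 = c.
Proof.
move=> cR; have cR' : c \in ~: R by rewrite inE.
have [b bq ->] := nth_enum_index cR'.
have hv : b <= rights w (size w) by rewrite rights_end; lia.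
have [k kw Hk] := @nat_ivt (rights w) (size w) b (rights0 w) (fun k _ => rightsS_le k) hv.
by exists k => //; rewrite /gridpt /= Hk.
Qed.

Lemma path_faceb : faceb (path_set R w).
Proof.
apply/andP; split.
  apply/sw_chainP => x y /path_setP [k kw ->] /path_setP [k' k'w ->].
  rewrite gridpt_row_ltE => lt1; rewrite leqNgt gridpt_col_ltE; apply/negP => lt2.
  have : k' < k by case: (ltnP k' k) => // h; move: (ups_mono w h); lia.
  move/ltnW/(rights_mono w); lia.
apply/rowcol_disjointP => x y /path_setP [k kw ->] /path_setP [k' k'w ->].
apply/eqP => E; have := gridpt_col_notin k'; by rewrite -E gridpt_row_in.
Qed.

Lemma path_maximal (G : {set vertex}) : faceb G -> path_set R w \subset G -> G = path_set R w.
Proof.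
case/andP => /sw_chainP cG /rowcol_disjointP dG /subsetP PG.
apply/eqP; rewrite eqEsubset; apply/andP; split; last by apply/subsetP.
apply/subsetP => y yG.
have y1R : y.1 \in R.
  apply: contraT => y1R; have [k kw E] := path_cover_col y1R.
  by move: (dG _ _ yG (PG _ (gridpt_in kw))); rewrite E eqxx.
have y2R : y.2 \notin R.
  apply/negP => y2R; have [k kw E] := path_cover_row y2R.
  by move: (dG _ _ (PG _ (gridpt_in kw)) yG); rewrite E eqxx.
have [a ap ya] := nth_enum_index y1R.
have y2R' : y.2 \in ~: R by rewrite inE.
have [b bq yb] := nth_enum_index y2R'.
move U0def : (p.-1 - a) => U0.
have kk : U0 + b <= size w by rewrite size_word; have := card_rows_gt0; have := card_cols_gt0; lia.
have hs := ups_add_rights w (U0 + b); rewrite (minn_idPl kk) in hs.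
have zin := PG _ (gridpt_in kk).
case: (ltngtP (ups w (U0 + b)) U0) => hU.
-   have h1 : val y.1 < val (gridpt w (U0 + b)).1.
    rewrite ya /gridpt /= /grid_row nth_enum_ltE //; first card_lia. exact: row_idx_lt.
  have h2 : val y.2 < val (gridpt w (U0 + b)).2.
    rewrite yb /gridpt /= /grid_col nth_enum_ltE //; first card_lia. exact: col_idx_lt.
  by move: (cG _ _ yG zin h1); rewrite leqNgt h2.
- have h1 : val (gridpt w (U0 + b)).1 < val y.1.
    have := ups_le (U0 + b); rewrite ya /gridpt /= /grid_row nth_enum_ltE //; first card_lia.
    exact: row_idx_lt.
  have h2 : val (gridpt w (U0 + b)).2 < val y.2.
    rewrite yb /gridpt /= /grid_col nth_enum_ltE //; first card_lia. exact: col_idx_lt.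
  by move: (cG _ _ zin yG h1); rewrite leqNgt h2.
- apply/path_setP; exists (U0 + b) => //.
  case: y ya yb {yG y1R y2R y2R'} => y1 y2 /= -> ->; rewrite /gridpt /grid_row /grid_col hU.
  by congr (nth _ _ _, nth _ _ _); lia.
Qed.

Lemma path_facet : facet K (path_set R w).
Proof.
apply/facetP; split; first exact: path_faceb.
by move=> G' fG' sG'; apply: path_maximal.
Qed.

Lemma path_set_sub : path_set R w \subset setX R (~: R).
Proof.
apply/subsetP => x /path_setP [k _ ->].
by rewrite !inE gridpt_row_in /= -in_setC inE gridpt_col_notin.
Qed.

Lemma path_facetR : facetR K R (path_set R w).
Proof.
split; first by split; [exact: (path_facet).1 | exact: path_set_sub].
by move=> G [fG _] sG; apply: path_maximal => //; apply/(faceP K).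
Qed.

Lemma path_set_sub_uniq (R' : {set 'I_n}) : path_set R w \subset setX R' (~: R') -> R' = R.
Proof.
move/subsetP => sub; apply/setP => i; apply/idP/idP => iR.
  apply: contraT => iR'; have [k kw E] := path_cover_col iR'.
  by move: (sub _ (gridpt_in kw)); rewrite !inE E iR andbF.
have [k kw E] := path_cover_row iR.
by move: (sub _ (gridpt_in kw)); rewrite !inE E => /andP[].
Qed.

Lemma rights_pred k : 0 < k -> k <= size w -> rights w k = rights w k.-1 + ~~ nth false w k.-1.
Proof. by move=> k0 kw; rewrite -rightsS ?prednK //; lia. Qed.
Lemma ups_pred k : 0 < k -> k <= size w -> ups w k = ups w k.-1 + nth false w k.-1.
Proof. by move=> k0 kw; rewrite -upsS ?prednK //; lia. Qed.

Lemma only_colE k : k <= size w -> only_in_col (path_set R w) (gridpt w k) =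
  ((0 < k) ==> ~~ nth false w k.-1) && ((k < size w) ==> ~~ nth false w k).
Proof.
move=> kw; apply/forall_inP/andP => [H|[h1 h2] y].
  split; apply/implyP => hk; apply/negP => wk.
    have km : k.-1 <= size w by lia.
    have := H _ (gridpt_in km); rewrite gridpt_col_eqE (rights_pred hk kw) wk addn0 eqxx /=.
    by move/eqP/gridpt_inj => /(_ km kw); lia.
  have km : k.+1 <= size w by lia.
  have := H _ (gridpt_in km); rewrite gridpt_col_eqE (rightsS hk) wk addn0 eqxx /=.
  by move/eqP/gridpt_inj => /(_ km kw); lia.
move/path_setP => [k' k'w ->]; apply/implyP; rewrite gridpt_col_eqE => /eqP E.
apply/eqP; congr gridpt; case: (ltngtP k' k) => // h.
  have hk : 0 < k by lia.
  move: (implyP h1 hk) => /negbTE wk.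
  have := rights_mono w (_ : k' <= k.-1); rewrite E (rights_pred hk kw) wk /= => /(_ ltac:(lia)).
  lia.
have hk : k < size w by lia.
move: (implyP h2 hk) => /negbTE wk.
have := rights_mono w (_ : k.+1 <= k'); rewrite (rightsS hk) wk /= E => /(_ h).
lia.
Qed.

Lemma only_rowE k : k <= size w -> only_in_row (path_set R w) (gridpt w k) =
  ((0 < k) ==> nth false w k.-1) && ((k < size w) ==> nth false w k).
Proof.
move=> kw; apply/forall_inP/andP => [H|[h1 h2] y].
  split; apply/implyP => hk; apply/negPn/negP => wk; move/negbTE: wk => wk.
    have km : k.-1 <= size w by lia.
    have := H _ (gridpt_in km); rewrite gridpt_row_eqE (ups_pred hk kw) wk addn0 eqxx /=.
    by move/eqP/gridpt_inj => /(_ km kw); lia.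
  have km : k.+1 <= size w by lia.
  have := H _ (gridpt_in km); rewrite gridpt_row_eqE (upsS hk) wk addn0 eqxx /=.
  by move/eqP/gridpt_inj => /(_ km kw); lia.
move/path_setP => [k' k'w ->]; apply/implyP; rewrite gridpt_row_eqE => /eqP E.
apply/eqP; congr gridpt; case: (ltngtP k' k) => // h.
  have hk : 0 < k by lia.
  move: (implyP h1 hk) => wk.
  have := ups_mono w (_ : k' <= k.-1); rewrite E (ups_pred hk kw) wk /= => /(_ ltac:(lia)).
  lia.
have hk : k < size w by lia.
move: (implyP h2 hk) => wk.
have := ups_mono w (_ : k.+1 <= k'); rewrite (upsS hk) wk /= E => /(_ h).
lia.
Qed.

Lemma FminusE k : k <= size w -> (gridpt w k \in Fminus R w) = minus_cond R w k (gridpt w k).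
Proof.
move=> kw; rewrite /Fminus inE gridpt_in // andTb; apply/existsP/idP => [[k' /andP[/eqP E mc]]|mc].
  rewrite pt_gridpt in E; have {}E := vertex_val_inj E.
  by have kk := gridpt_inj (ltnSE (ltn_ord k')) kw E; rewrite kk in mc.
have kw' : k < (size w).+1 by [].
by exists (Ordinal kw'); rewrite /= pt_gridpt eqxx mc.
Qed.

Lemma FplusE k : k <= size w -> (gridpt w k \in Fplus R w) = ~~ minus_cond R w k (gridpt w k).
Proof. by move=> kw; rewrite /Fplus inE FminusE // gridpt_in // andbT. Qed.

End Word.

Lemma maxR_in : grid_row p.-1 \in R.
Proof. by apply: mem_nth_enum; have := card_rows_gt0; lia. Qed.

Lemma maxR_E : maxR R = val (grid_row p.-1).
Proof.
apply/eqP; rewrite eqn_leq; apply/andP; split.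
  apply/bigmax_leqP => i iR; have [a ap ->] := nth_enum_index iR.
  case: (ltngtP a p.-1) => h; last by rewrite h.
    by apply: ltnW; apply: nth_enum_lt => //; have := card_rows_gt0; lia.
  lia.
by apply: (@leq_bigmax_cond _ _ (fun i : 'I_n => val i)); apply: maxR_in.
Qed.

Lemma le_maxR r : r \in R -> val r <= maxR R.
Proof. by move=> rR; rewrite /maxR; apply: (@leq_bigmax_cond _ _ (fun i : 'I_n => val i)). Qed.

Lemma col_ne_maxR c : c \notin R -> val c != maxR R.
Proof.
move=> cR; rewrite maxR_E; apply/negP => /eqP /val_inj E.
by move: maxR_in; rewrite -E (negbTE cR).
Qed.

Lemma rowmaxE w (vw : valid_word R w) k : (val (gridpt w k).1 == maxR R) = (ups w k == 0).
Proof.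
rewrite maxR_E; apply/eqP/eqP => [/val_inj E|E].
  have pp : p.-1 < p by have := card_rows_gt0; card_lia.
  have := nth_enum_inj (row_idx_lt vw k) pp E.
  have := ups_le vw k; card_lia.
by rewrite /gridpt /= E subn0.
Qed.

Lemma row_lt_maxE w (vw : valid_word R w) k : (val (gridpt w k).1 < maxR R) = (0 < ups w k).
Proof.
rewrite maxR_E /gridpt /= /grid_row nth_enum_ltE.
- by have := ups_le vw k; have := card_rows_gt0; move=> *; apply/idP/idP; card_lia.
- exact: row_idx_lt.
- by have := card_rows_gt0; card_lia.
Qed.

Lemma Fminus_meets_col w (vw : valid_word R w) c : c \notin R -> val c < maxR R ->
  exists2 x, x \in Fminus R w & x.2 = c.
Proof.
move=> cR cmax.
have ex : exists k, (k <= size w) && ((gridpt w k).2 == c).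
  by have [k kw E] := path_cover_col vw cR; exists k; rewrite kw E eqxx.
case: (ex_minnP ex) => k0 /andP[k0w /eqP E0] kmin.
have E1 : (0 < k0) ==> ~~ nth false w k0.-1.
  apply/implyP => h; apply/negP => wk.
  have : (k0.-1 <= size w) && ((gridpt w k0.-1).2 == c).
    rewrite -E0 (gridpt_col_eqE vw) (rights_pred h k0w) wk addn0 eqxx andbT; lia.
  by move/kmin; lia.
have E2 : (0 < k0) || (ups w k0 == 0).
  by case: (posnP k0) => [->|//]; rewrite ups0 eqxx orbT.
exists (gridpt w k0) => //.
rewrite (FminusE vw) // /minus_cond; cbv zeta beta.
rewrite (only_colE vw) // (only_rowE vw) // (rowmaxE vw) E0 cmax /leftturn /rightturn.
move: E1 E2; case: (0 < k0); case: (k0 < size w); case: (nth false w k0.-1);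
  case: (nth false w k0); case: (ups w k0 == 0) => //=.
Qed.

Lemma card_rows_gt1 : (exists2 r, r \in R & val r < maxR R) -> 0 < p.-1.
Proof.
case=> r rR; have [a ap ->] := nth_enum_index rR; rewrite maxR_E /grid_row nth_enum_ltE //.
  by move=> h; move: ap h; move: (#|R|) => P; lia.
by have := card_rows_gt0; move: (#|R|) => P; lia.
Qed.

Lemma Fminus_meets_maxrow w (vw : valid_word R w) : (exists2 r, r \in R & val r < maxR R) ->
  exists2 x, x \in Fminus R w & val x.1 = maxR R.
Proof.
move=> hr; have p2 := card_rows_gt1 hr.
have ex : exists k, (k <= size w) && (ups w k == 0) by exists 0; rewrite ups0 eqxx.
have ub : forall k, (k <= size w) && (ups w k == 0) -> k <= size w.
  by move=> k /andP[].
case: (ex_maxnP ex ub) => k1 /andP[k1w /eqP U1] kmax.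
have k1lt : k1 < size w.
  rewrite ltn_neqAle k1w andbT; apply/eqP => E; move: U1; rewrite E ups_end //.
  by move: p2; move: (#|R|) => P; lia.
have E3 : nth false w k1.
  apply: contraT => /negbTE wk.
  have : (k1.+1 <= size w) && (ups w k1.+1 == 0) by rewrite k1lt upsS // U1 wk.
  by move/kmax; rewrite ltnn.
have E1 : (0 < k1) ==> ~~ nth false w k1.-1.
  apply/implyP => h; move: U1; rewrite (ups_pred h k1w); case: nth => //; lia.
exists (gridpt w k1); last by apply/eqP; rewrite (rowmaxE vw) U1.
rewrite (FminusE vw) // /minus_cond; cbv zeta beta.
rewrite (only_colE vw) // (only_rowE vw) // (rowmaxE vw) U1 eqxx /leftturn /rightturn k1lt E3.
move: E1; case: (0 < k1); case: (nth false w k1.-1) => //=.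
Qed.

Lemma Fplus_meets_row w (vw : valid_word R w) r : r \in R -> val r < maxR R ->
  exists2 x, x \in Fplus R w & x.1 = r.
Proof.
move=> rR rmax.
have ex : exists k, (k <= size w) && ((gridpt w k).1 == r).
  by have [k kw E] := path_cover_row vw rR; exists k; rewrite kw E eqxx.
case: (ex_minnP ex) => k0 /andP[k0w /eqP E0] kmin.
have U0 : 0 < ups w k0 by rewrite -(row_lt_maxE vw) E0.
have k0p : 0 < k0 by case: (posnP k0) U0 => [->|//]; rewrite ups0.
have E2 : nth false w k0.-1.
  apply: contraT => /negbTE wk.
  have : (k0.-1 <= size w) && ((gridpt w k0.-1).1 == r).
    rewrite -E0 (gridpt_row_eqE vw) (ups_pred k0p k0w) wk addn0 eqxx andbT; lia.
  by move/kmin; lia.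
exists (gridpt w k0) => //.
rewrite (FplusE vw) // /minus_cond; cbv zeta beta.
rewrite (only_colE vw) // (only_rowE vw) // (rowmaxE vw) /leftturn /rightturn k0p E2.
have -> : (ups w k0 == 0) = false by apply/negbTE; rewrite -lt0n.
by rewrite /= !andbF.
Qed.

Lemma Fplus_meets_col w (vw : valid_word R w) c : c \notin R -> maxR R < val c ->
  exists2 x, x \in Fplus R w & x.2 = c.
Proof.
move=> cR cmax.
have ex : exists k, (k <= size w) && ((gridpt w k).2 == c).
  by have [k kw E] := path_cover_col vw cR; exists k; rewrite kw E eqxx.
have ub : forall k, (k <= size w) && ((gridpt w k).2 == c) -> k <= size w.
  by move=> k /andP[].
case: (ex_maxnP ex ub) => k1 /andP[k1w /eqP E0] kmax.
have F1 : (k1 < size w) ==> ~~ nth false w k1.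
  apply/implyP => h; apply/negP => wk.
  have : (k1.+1 <= size w) && ((gridpt w k1.+1).2 == c).
    by rewrite -E0 (gridpt_col_eqE vw) (rightsS h) wk addn0 eqxx andbT.
  by move/kmax; rewrite ltnn.
have F2 : (0 < k1) ==> (nth false w k1.-1 ==> (ups w k1 != 0)).
  apply/implyP => h; apply/implyP => wk; rewrite (ups_pred h k1w) wk; lia.
have F3 : (val (gridpt w k1).2 < maxR R) = false.
  by rewrite E0; apply/negbTE; rewrite -leqNgt ltnW.
exists (gridpt w k1) => //.
rewrite (FplusE vw) // /minus_cond; cbv zeta beta.
rewrite (only_colE vw) // (only_rowE vw) // (rowmaxE vw) F3 /leftturn /rightturn.
move: F1 F2; case: (0 < k1); case: (k1 < size w); case: (nth false w k1.-1);
  case: (nth false w k1); case: (ups w k1 == 0) => //=.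
Qed.

Lemma gridpt_eq_counts w v (vw : valid_word R w) (vv : valid_word R v) k k' :
  gridpt w k = gridpt v k' -> ups w k = ups v k' /\ rights w k = rights v k'.
Proof.
move=> E; have E1 : (gridpt w k).1 = (gridpt v k').1 by rewrite E.
have E2 : (gridpt w k).2 = (gridpt v k').2 by rewrite E.
have := nth_enum_inj (row_idx_lt vw k) (row_idx_lt vv k') E1.
have := nth_enum_inj (col_idx_lt vw k) (col_idx_lt vv k') E2.
have := ups_le vw k; have := ups_le vv k'; have := card_rows_gt0; move: (#|R|) => P.
move=> *; split; lia.
Qed.

Lemma lexlt_leftturn w v (vw : valid_word R w) (vv : valid_word R v) : lexlt v w ->
  exists2 k, k <= size w & leftturn w k /\ gridpt w k \notin path_set R v.
Proof.
case/existsP => -[j jv] /= /andP[/andP[/eqP tk vj] wj].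
have sv : size v = size w by rewrite (size_word vv) (size_word vw).
have jw : j < size w by rewrite -sv.
have cU : ups v j = ups w j by rewrite /ups tk.
have cH : rights v j = rights w j by rewrite /rights tk.
have ex : exists m, [&& j <= m, m < size w & nth false w m].
  case: (boolP [exists m : 'I_(size w), (j <= m) && nth false w m]).
    by case/existsP => m /andP[jm wm]; exists m; rewrite jm ltn_ord wm.
  rewrite negb_exists => /forallP H.
  have fl : ups w (size w) = ups w j.
    apply: ups_const => //; first exact: ltnW.
    move=> i ji iw; have := H (Ordinal iw); rewrite /= ji /=; by move/negbTE.
  have : ups v j.+1 <= ups v (size v) by apply: ups_mono; rewrite sv.
  rewrite (ups_end vv) upsS // vj -(ups_end vw) fl cU; lia.
case: (ex_minnP ex) => m /and3P[jm mw wm] mmin.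
have jm' : j < m by rewrite ltn_neqAle jm andbT; apply/eqP => E; by move: wj; rewrite E wm.
have flat : forall i, j <= i -> i < m -> nth false w i = false.
  move=> i ji im; apply/negbTE/negP => wi.
  have : [&& j <= i, i < size w & nth false w i] by rewrite ji wi; lia.
  by move/mmin; lia.
have Um : ups w m = ups w j := ups_const (ltnW jm') flat.
have Hm : rights w m = rights w j + (m - j).
  have := ups_add_rights w m; have := ups_add_rights w j; rewrite Um; move=> h1 h2.
  rewrite (minn_idPl (ltnW mw)) in h2; rewrite (minn_idPl (ltnW jw)) in h1; lia.
exists m; first exact: ltnW.
split.
  rewrite /leftturn wm mw (_ : 0 < m) /= ?andbT; last lia.
  by rewrite flat //; lia.
apply/negP => /(path_setP vv) [k' k'v E].
have [E1 E2] := gridpt_eq_counts vw vv E.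
case: (leqP k' j) => h.
  have := rights_mono v h; rewrite cH -E2 Hm; lia.
have := ups_mono v h; rewrite upsS // vj cU -E1 Um; lia.
Qed.

Lemma lexlt_rightturn w v (vw : valid_word R w) (vv : valid_word R v) : lexlt w v ->
  exists2 k, k <= size w & rightturn w k /\ gridpt w k \notin path_set R v.
Proof.
case/existsP => -[j jw] /= /andP[/andP[/eqP tk wj] vj].
have sv : size v = size w by rewrite (size_word vv) (size_word vw).
have cU : ups v j = ups w j by rewrite /ups tk.
have cH : rights v j = rights w j by rewrite /rights tk.
have ex : exists m, [&& j <= m, m < size w & ~~ nth false w m].
  case: (boolP [exists m : 'I_(size w), (j <= m) && ~~ nth false w m]).
    by case/existsP => m /andP[jm wm]; exists m; rewrite jm ltn_ord wm.
  rewrite negb_exists => /forallP H.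
  have fl : rights w (size w) = rights w j.
    apply: rights_const => //; first exact: ltnW.
    move=> i ji iw; have := H (Ordinal iw); rewrite /= ji /=; by move/negPn.
  have : rights v j.+1 <= rights v (size v) by apply: rights_mono; rewrite sv.
  rewrite (rights_end vv) rightsS ?sv // vj -(rights_end vw) fl cH; lia.
case: (ex_minnP ex) => m /and3P[jm mw wm] mmin.
have jm' : j < m by rewrite ltn_neqAle jm andbT; apply/eqP => E; by move: wm; rewrite -E wj.
have flat : forall i, j <= i -> i < m -> nth false w i = true.
  move=> i ji im; apply/negPn/negP => wi.
  have : [&& j <= i, i < size w & ~~ nth false w i] by rewrite ji wi; lia.
  by move/mmin; lia.
have Hm : rights w m = rights w j := rights_const (ltnW jm') flat.
have Um : ups w m = ups w j + (m - j).
  have := ups_add_rights w m; have := ups_add_rights w j; rewrite Hm; move=> h1 h2.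
  rewrite (minn_idPl (ltnW mw)) in h2; rewrite (minn_idPl (ltnW jw)) in h1; lia.
exists m; first exact: ltnW.
split.
  rewrite /rightturn wm mw (_ : 0 < m) /= ?andbT; last lia.
  by rewrite flat //; lia.
apply/negP => /(path_setP vv) [k' k'v E].
have [E1 E2] := gridpt_eq_counts vw vv E.
case: (leqP k' j) => h.
  have := ups_mono v h; rewrite cU -E1 Um; lia.
have := rights_mono v h; rewrite rightsS ?sv // vj cH -E2 Hm; lia.
Qed.

Section FlipTurnPath.
Variables (w : seq bool) (k : nat) (b : bool).
Hypotheses (vw : valid_word R w) (k_gt0 : 0 < k) (k_lt : k < size w)
  (step_in : nth false w k.-1 = ~~ b) (step_out : nth false w k = b).

Lemma valid_flip_turn : valid_word R (flip_turn w k b).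
Proof. by move: vw; rewrite /valid_word size_flip_turn // !flip_turn_count_all. Qed.

Lemma path_setD1_flip_turn : path_set R w :\ gridpt w k \subset path_set R (flip_turn w k b).
Proof.
apply/subsetP => y /setD1P[ny /(path_setP vw) [k' k'w ey]].
apply/(path_setP valid_flip_turn); exists k'; first by rewrite size_flip_turn.
have k'k : k' != k by apply: contraNneq ny => E; rewrite ey E.
by rewrite ey /gridpt /ups /rights !flip_turn_count.
Qed.

End FlipTurnPath.

Lemma path_set_inj w1 w2 (v1 : valid_word R w1) (v2 : valid_word R w2) :
  path_set R w1 = path_set R w2 -> w1 = w2.
Proof.
move=> E; apply/eqP; apply: contraT => ne.
have ss : size w1 = size w2 by rewrite (size_word v1) (size_word v2).
case/orP: (lexlt_total ss ne) => lx.
  have [k kw [_ nin]] := lexlt_leftturn v2 v1 lx.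
  by move: nin; rewrite E gridpt_in.
have [k kw [_ nin]] := lexlt_leftturn v1 v2 lx.
by move: nin; rewrite -E gridpt_in.
Qed.

Lemma path_setD1_single w (vw : valid_word R w) k : k <= size w ->
  only_in_col (path_set R w) (gridpt w k) -> only_in_row (path_set R w) (gridpt w k) ->
  path_set R w :\ gridpt w k = set0.
Proof.
move=> kw; rewrite (only_colE vw) // (only_rowE vw) //.
case: (posnP k) => [k0|kp]; last first.
  by move=> /andP[na _] /andP[a _]; move: na a; case: nth.
subst k; case: (posnP (size w)) => [s0|sp]; last first.
  by move=> /andP[_ na] /andP[_ a]; move: na a; case: nth.
move=> _ _; apply/setP => y; rewrite in_setD1 in_set0; apply/negP => /andP[ny].
move/(path_setP vw) => [k' k'w ey].
have k0 : k' = 0 by lia.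
by move: ny; rewrite ey k0 eqxx.
Qed.

Lemma noturn_only_in_col_or_row w (vw : valid_word R w) k : k <= size w -> ~~ leftturn w k ->
  ~~ rightturn w k ->
  only_in_col (path_set R w) (gridpt w k) || only_in_row (path_set R w) (gridpt w k).
Proof.
move=> kw; rewrite (only_colE vw) // (only_rowE vw) // /leftturn /rightturn.
by case: (0 < k); case: (k < size w); case: (nth false w k.-1); case: (nth false w k).
Qed.

Lemma Fminus_subset w : Fminus R w \subset path_set R w.
Proof. by apply/subsetP => x; rewrite /Fminus inE => /andP[]. Qed.
Lemma Fplus_subset w : Fplus R w \subset path_set R w.
Proof. by apply/subsetP => x; rewrite /Fplus inE => /andP[]. Qed.

Lemma path_grid_spanning w (vw : valid_word R w) : grid_spanning R (path_set R w).
Proof.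
split; first exact: path_set_sub vw.
  by move=> r /(path_cover_row vw) [k kw <-]; exists (gridpt w k).2; apply: gridpt_in.
by move=> c /(path_cover_col vw) [k kw <-]; exists (gridpt w k).1; apply: gridpt_in.
Qed.

Lemma facetR_path_uniq R' w (vw : valid_word R w) : facetR K R' (path_set R w) -> R' = R.
Proof. by case=> -[_ sub] _; apply: (path_set_sub_uniq vw). Qed.

Lemma facet_lt_paths v w : valid_word R v -> valid_word R w -> lexlt v w ->
  facet_lt K (path_set R v) (path_set R w).
Proof.
move=> vv vw lx; exists R, R; split=> //; [exact: path_facetR | exact: path_facetR |].
by right; split=> //; exists v, w.
Qed.

Lemma facet_lt_rowsof_path w G z : valid_word R w -> facet K G -> z \in G ->
  setlt (rowsof G) R -> facet_lt K G (path_set R w).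
Proof.
move=> vw fG zG lt; have [pG fRG] := facet_rowsof fG zG.
by exists (rowsof G), R; split=> //; [exact: path_facetR | left].
Qed.

Lemma facet_lt_path_rowsof w G z : valid_word R w -> facet K G -> z \in G ->
  setlt R (rowsof G) -> facet_lt K (path_set R w) G.
Proof.
move=> vw fG zG lt; have [pG fRG] := facet_rowsof fG zG.
by exists R, (rowsof G); split=> //; [exact: path_facetR | left].
Qed.

Lemma lt_maxR_exists (c : 'I_n) : val c < maxR R -> [exists j : 'I_n, (c < j) && (j \in R)].
Proof. by move=> cmax; apply/existsP; exists (grid_row p.-1); rewrite maxR_in andbT -maxR_E. Qed.

Lemma Fminus_not_subset w (vw : valid_word R w) G :
  facet_lt K G (path_set R w) -> ~~ (Fminus R w \subset G).
Proof.
move=> [S [R' [pS _ [[_ /subsetP GS] _] fR'F ord]]].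
rewrite (facetR_path_uniq vw fR'F) in ord.
case: ord => [ltSR | [eSR]]; last first.
  subst S; case=> v [w' [vv vw' <- Fw' lx]]; rewrite (path_set_inj vw' vw Fw') in lx.
  have [k kw [lturn notv]] := lexlt_leftturn vw vv lx.
  by apply/subsetPn; exists (gridpt w k); rewrite // (FminusE vw) // /minus_cond lturn.
apply/negP => /subsetP FG.
have inS y : y \in Fminus R w -> (y.1 \in S) && (y.2 \notin S).
  by move=> /FG /GS; rewrite !inE.
have [m [agree mSR]] := setlt_first_diff (setlt_neq ltSR).
move: ltSR; rewrite (setltE agree mSR); case: (boolP (m \in S)) => mS /=.
  have mR : m \notin R by move: mSR; rewrite mS; case: (m \in R).
  case/existsP => j /andP[mj jR].
  have [x xF colm] := Fminus_meets_col vw mR (leq_trans mj (le_maxR jR)).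
  by move: (inS _ xF); rewrite colm mS andbF.
have mR : m \in R by move: mSR; rewrite (negbTE mS); case: (m \in R).
move/existsPn => noabove.
have belowm j : j \in S -> j < m.
  move=> jS; case: (ltngtP j m) => // [mj | /val_inj jm].
    by move: (noabove j); rewrite mj jS.
  by rewrite -jm jS in mS.
case/andP: pS => /set0Pn [s sS] _; have sm := belowm s sS.
case: (boolP (s \in R)) => sR.
  have [x xF rowmax] := Fminus_meets_maxrow vw (ex_intro2 _ _ s sR (leq_trans sm (le_maxR mR))).
  by case/andP: (inS _ xF) => /belowm; rewrite ltnNge rowmax le_maxR.
have [x xF cols] := Fminus_meets_col vw sR (leq_trans sm (le_maxR mR)).
by move: (inS _ xF); rewrite cols sS andbF.
Qed.

Lemma minus_cond_rightturn w k x : rightturn w k -> ~~ minus_cond R w k x.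
Proof.
rewrite /minus_cond /leftturn /rightturn /=.
by case: (0 < k); case: (k < size w); case: (nth false w k.-1); case: (nth false w k).
Qed.

Lemma Fplus_not_subset w (vw : valid_word R w) G :
  facet_lt K (path_set R w) G -> ~~ (Fplus R w \subset G).
Proof.
move=> [R' [S [_ pS fR'F [[_ /subsetP GS] _] ord]]].
rewrite (facetR_path_uniq vw fR'F) in ord.
case: ord => [ltRS | [eRS]]; last first.
  subst S; case=> w' [v [vw' vv Fw' <- lx]]; rewrite (path_set_inj vw' vw Fw') in lx.
  have [k kw [rturn notv]] := lexlt_rightturn vw vv lx.
  by apply/subsetPn; exists (gridpt w k); rewrite // (FplusE vw) // minus_cond_rightturn.
apply/negP => /subsetP FG.
have inS y : y \in Fplus R w -> (y.1 \in S) && (y.2 \notin S).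
  by move=> /FG /GS; rewrite !inE.
have [m [agree mRS]] := setlt_first_diff (setlt_neq ltRS).
move: ltRS; rewrite (setltE agree mRS); case: (boolP (m \in R)) => mR /=.
  have mS : m \notin S by move: mRS; rewrite mR; case: (m \in S).
  case/existsP => j /andP[mj jS]; case: (ltnP m (maxR R)) => mmax.
    have [x xF rowm] := Fplus_meets_row vw mR mmax.
    by move: (inS _ xF); rewrite rowm (negbTE mS).
  have jR : j \notin R by apply: contraTN (leq_ltn_trans mmax mj); rewrite -leqNgt; apply: le_maxR.
  have [x xF colj] := Fplus_meets_col vw jR (leq_ltn_trans mmax mj).
  by move: (inS _ xF); rewrite colj jS andbF.
have mS : m \in S by move: mRS; rewrite (negbTE mR); case: (m \in S).
move/existsPn => noabove.
have maxm : maxR R < m.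
  rewrite maxR_E; case: (ltngtP (grid_row p.-1) m) => // [mmax | /val_inj mmax].
    by move: (noabove (grid_row p.-1)); rewrite mmax maxR_in.
  by rewrite -mmax maxR_in in mR.
have [x xF colm] := Fplus_meets_col vw mR maxm.
by move: (inS _ xF); rewrite colm mS andbF.
Qed.

Lemma Fminus_covered w (vw : valid_word R w) x : x \in Fminus R w ->
  path_set R w :\ x != set0 ->
  exists2 G, facet K G /\ facet_lt K G (path_set R w) & path_set R w :\ x \subset G.
Proof.
move=> xFm; have [k kw ex] := (path_setP vw x).1 (subsetP (Fminus_subset w) _ xFm).
subst x => ne; have [z zFx] := set0Pn _ ne.
move: xFm; rewrite (FminusE vw kw) /minus_cond /=.
case/or3P => [lturn | /andP[/andP[_ col] cmax] | /andP[/andP[/andP[_ ncol] row] rmax]].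
- case/and4P: lturn => k_gt0 k_lt /negbTE step_in step_out.
  have vf := @valid_flip_turn w k true vw k_gt0 k_lt step_in step_out.
  have lx := @lexlt_flip_turn w k true k_gt0 k_lt step_in step_out.
  exists (path_set R (flip_turn w k true)); last exact: path_setD1_flip_turn.
  by split; [exact: path_facet | exact: facet_lt_paths vf vw lx].
- have nrow : ~~ only_in_row (path_set R w) (gridpt w k).
    by apply: contra ne => row; rewrite (path_setD1_single vw kw col row).
  have [G fG [sub rG]] :=
    exchange_col K (path_faceb vw) (path_grid_spanning vw) (gridpt_in vw kw) col nrow.
  exists G => //; split=> //; apply: (facet_lt_rowsof_path vw fG (subsetP sub _ zFx)).
  by rewrite rG setlt_setU1_lt ?(gridpt_col_notin vw) ?lt_maxR_exists.
- have [G fG [sub rG]] :=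
    exchange_row K (path_faceb vw) (path_grid_spanning vw) (gridpt_in vw kw) row ncol.
  exists G => //; split=> //; apply: (facet_lt_rowsof_path vw fG (subsetP sub _ zFx)).
  by rewrite rG setlt_setD1_max ?(gridpt_row_in vw) // => j /le_maxR; rewrite (eqP rmax).
Qed.

Lemma Fplus_covered w (vw : valid_word R w) x : x \in Fplus R w ->
  path_set R w :\ x != set0 ->
  exists2 G, facet K G /\ facet_lt K (path_set R w) G & path_set R w :\ x \subset G.
Proof.
move=> xFp; have [k kw ex] := (path_setP vw x).1 (subsetP (Fplus_subset w) _ xFp).
subst x => ne; have [z zFx] := set0Pn _ ne.
move: xFp; rewrite (FplusE vw kw); case: (boolP (rightturn w k)) => [rturn _ | nrt].
  case/and4P: rturn => k_gt0 k_lt step_in /negbTE step_out.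
  have vf := @valid_flip_turn w k false vw k_gt0 k_lt step_in step_out.
  have lx := @lexlt_flip_turn w k false k_gt0 k_lt step_in step_out.
  exists (path_set R (flip_turn w k false)); last exact: path_setD1_flip_turn.
  by split; [exact: path_facet | exact: facet_lt_paths vw vf lx].
rewrite /minus_cond /= !negb_or => /and3P[nlt nbullet ncirc].
have := noturn_only_in_col_or_row vw kw nlt nrt.
case: (boolP (only_in_col (path_set R w) (gridpt w k))) => [col _ | ncol /= row].
  have nrow : ~~ only_in_row (path_set R w) (gridpt w k).
    by apply: contra ne => row; rewrite (path_setD1_single vw kw col row).
  have maxc : maxR R < val (gridpt w k).2.
    move: nbullet; rewrite nlt nrt col /= -leqNgt leq_eqVlt eq_sym.
    by rewrite (negbTE (col_ne_maxR (gridpt_col_notin vw k))).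
  have [G fG [sub rG]] :=
    exchange_col K (path_faceb vw) (path_grid_spanning vw) (gridpt_in vw kw) col nrow.
  exists G => //; split=> //; apply: (facet_lt_path_rowsof vw fG (subsetP sub _ zFx)).
  rewrite rG setlt_setU1_gt ?(gridpt_col_notin vw) // => j /le_maxR jmax.
  exact: leq_ltn_trans jmax maxc.
have rmax : val (gridpt w k).1 < maxR R.
  move: ncirc; rewrite nlt nrt ncol row /= => nmax.
  by rewrite ltn_neqAle nmax le_maxR ?(gridpt_row_in vw).
have [G fG [sub rG]] :=
  exchange_row K (path_faceb vw) (path_grid_spanning vw) (gridpt_in vw kw) row ncol.
exists G => //; split=> //; apply: (facet_lt_path_rowsof vw fG (subsetP sub _ zFx)).
by rewrite rG setlt_setD1_lt ?(gridpt_row_in vw) ?lt_maxR_exists.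
Qed.

End Paths.

Theorem proposition4p7 (K : fieldType) (n : nat) : (2 <= n)%N ->
  (forall F : {set vertex n}, facet K F ->
     (exists G, facet K G /\ facet_lt K G F) ->
     forall (R : {set 'I_n}) (w : seq bool),
       properR R -> valid_word R w -> path_set R w = F ->
       forall A : {set vertex n},
         (gen_cx (fun G => G = F) A /\ gen_cx (fun G => facet K G /\ facet_lt K G F) A)
         <-> gen_cx (fun G => exists2 x, x \in Fminus R w & G = F :\ x) A)
  /\
  (forall F : {set vertex n}, facet K F ->
     (exists G, facet K G /\ facet_lt K F G) ->
     forall (R : {set 'I_n}) (w : seq bool),
       properR R -> valid_word R w -> path_set R w = F ->
       forall A : {set vertex n},
         (gen_cx (fun G => G = F) A /\ gen_cx (fun G => facet K G /\ facet_lt K F G) A)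
         <-> gen_cx (fun G => exists2 x, x \in Fplus R w & G = F :\ x) A).
Proof.
case: n => [|n'] // _; split=> F _ [G0 G0F] R w pR vw eF; subst F; apply: gen_cx_meet_facet.
- by move=> G [_ GF]; exact: (Fminus_not_subset pR vw GF).
- move=> x xF; case: (eqVneq (path_set R w :\ x) set0) => [->|ne].
    by exists G0; rewrite ?sub0set.
  exact: (Fminus_covered K pR vw xF ne).
- by move=> G [_ FG]; exact: (Fplus_not_subset pR vw FG).
- move=> x xF; case: (eqVneq (path_set R w :\ x) set0) => [->|ne].
    by exists G0; rewrite ?sub0set.
  exact: (Fplus_covered K pR vw xF ne).
Qed.
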